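(* Let $f:\mathbb{R}^n\to\overline{\mathbb{R}}$ be a proper closed convex function with conjugate $f^*$, and let $K=\{(x,r)\in\mathbb{R}^n\times\mathbb{R} : x=0,\ r\ge 0\}$. A subset $F\subseteq\operatorname{epi} f$ is a $K$-minimal exposed face of $\operatorname{epi} f$ if and only if there is some $\bar u\in\operatorname{dom} f^*$ with $\partial f^*(\bar u)\neq\emptyset$ such that $$F=\{(x,f(x))\in\mathbb{R}^n\times\mathbb{R} : \bar u\in\partial f(x)\}.$$ Moreover, a subset $F^*\subseteq\operatorname{epi} f^*$ is a $K$-minimal exposed face of $\operatorname{epi} f^*$ if and only if there is some $\bar x\in\operatorname{dom} f$ with $\partial f(\bar x)\neq\emptyset$ such that $$F^*=\{(u,f^*(u))\in\mathbb{R}^n\times\mathbb{R} : u\in\partial f(\bar x)\}.$$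
   Context: $\overline{\mathbb{R}}=\mathbb{R}\cup\{\pm\infty\}$; $f^*(u)=\sup_x(\langle x,u\rangle-f(x))$. An exposed face of a convex set $A\subseteq\mathbb{R}^{n+1}$ is a set of the form $A\cap H$ where $H$ is a supporting hyperplane to $A$ (i.e. $A\cap H\neq\emptyset$ and $A$ lies in one closed half-space bounded by $H$). A point $p\in A$ is minimal with respect to $K$ if $(\{p\}-K\setminus(-K))\cap A=\emptyset$; a face is $K$-minimal if all its points are minimal with respect to $K$. *)

(* R : realType, points of R^n are row vectors 'rV[R]_n,
   points of R^(n+1) are pairs ('rV[R]_n * R), values of f live in \bar R. *)
From HB Require Import structures.
From mathcomp Require Import all_boot all_order all_algebra.
From mathcomp Require Import all_classical all_reals all_analysis.
Set Implicit Arguments. Unset Strict Implicit. Unset Printing Implicit Defensive.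
Import Order.TTheory GRing.Theory Num.Theory.
Import numFieldNormedType.Exports.
Local Open Scope classical_set_scope.
Local Open Scope ring_scope.

Section Defs.
Context {R : realType} {n : nat}.

Definition dotp (x u : 'rV[R]_n) : R := \sum_(i < n) x ord0 i * u ord0 i.

Definition dotp1 (a p : 'rV[R]_n * R) : R := dotp a.1 p.1 + a.2 * p.2.

Definition epi (f : 'rV[R]_n -> \bar R) : set ('rV[R]_n * R) :=
  [set p | (f p.1 <= p.2%:E)%E].

Definition dom (f : 'rV[R]_n -> \bar R) : set 'rV[R]_n :=
  [set x | (f x < +oo)%E].

Definition proper_fun (f : 'rV[R]_n -> \bar R) : Prop :=
  (forall x, f x != -oo%E) /\ (exists x, (f x < +oo)%E).

Definition convex_set1 (A : set ('rV[R]_n * R)) : Prop :=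
  forall p q t, A p -> A q -> 0 <= t -> t <= 1 ->
    A (t *: p.1 + (1 - t) *: q.1, t * p.2 + (1 - t) * q.2).

Definition convex_fun (f : 'rV[R]_n -> \bar R) : Prop := convex_set1 (epi f).

Definition closed_fun (f : 'rV[R]_n -> \bar R) : Prop := closed (epi f).

Definition conj_fun (f : 'rV[R]_n -> \bar R) : 'rV[R]_n -> \bar R :=
  fun u => ereal_sup [set ((dotp x u)%:E - f x)%E | x in setT].

(* u \in \partial f(x)  (empty when f x is not finite) *)
Definition subdiff (f : 'rV[R]_n -> \bar R) (x u : 'rV[R]_n) : Prop :=
  f x \is a fin_num /\ forall y, (f x + (dotp (y - x) u)%:E <= f y)%E.

Definition exposed_face (A F : set ('rV[R]_n * R)) : Prop :=
  exists (a : 'rV[R]_n * R) (b : R),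
    a != (0, 0) /\
    (exists p, A p /\ dotp1 a p = b) /\
    (forall p, A p -> dotp1 a p <= b) /\
    F = A `&` [set p | dotp1 a p = b].

Definition Kcone : set ('rV[R]_n * R) := [set k | k.1 = 0 /\ 0 <= k.2].

Definition Kminimal_point (K A : set ('rV[R]_n * R)) (p : 'rV[R]_n * R) : Prop :=
  A p /\
  [set (p.1 - k.1, p.2 - k.2) | k in K `\` [set (- q.1, - q.2) | q in K]] `&` A
    = set0.

Definition Kminimal_face (K A F : set ('rV[R]_n * R)) : Prop :=
  forall p, F p -> Kminimal_point K A p.

End Defs.

From HB Require Import structures.
From mathcomp Require Import all_boot all_order all_algebra.
From mathcomp Require Import all_classical all_reals all_analysis.
From mathcomp Require Import ring lra.
Import Order.TTheory GRing.Theory Num.Theory.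
Import numFieldNormedType.Exports.
Set Implicit Arguments. Unset Strict Implicit. Unset Printing Implicit Defensive.
Local Open Scope classical_set_scope.
Local Open Scope ring_scope.

(* A point of epi f is K-minimal iff it lies on the graph of f, so a K-minimal
   exposed face cannot come from a vertical supporting hyperplane: such a face
   would contain the points straight above its graph points.  Normalising the
   normal of the hyperplane to (u, -1), the face is the set of graph points at
   which x |-> <x, u> - f x attains its supremum f^*(u), i.e. the points (x, f x)
   with u in the subdifferential of f at x.  Both statements then follow from
   the symmetry  u \in \partial f(x) <-> x \in \partial f^*(u), which rests on
   the Fenchel-Moreau identity f^** = f; the latter is proved by separating a
   point strictly below the graph from the closed convex epigraph by a
   hyperplane through its nearest point, tilting a vertical separating
   hyperplane with a nonvertical one when necessary. *)

Section InnerProduct.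
Context {R : realType} {n : nat}.
Implicit Types (x y u v : 'rV[R]_n).

Lemma dotpC x u : dotp x u = dotp u x.
Proof. by apply: eq_bigr => i _; rewrite mulrC. Qed.

Lemma dotpDl x y u : dotp (x + y) u = dotp x u + dotp y u.
Proof. by rewrite /dotp -big_split; apply: eq_bigr => i _; rewrite !mxE mulrDl. Qed.

Lemma dotpZl a x u : dotp (a *: x) u = a * dotp x u.
Proof. by rewrite /dotp mulr_sumr; apply: eq_bigr => i _; rewrite !mxE mulrA. Qed.

Lemma dotpNl x u : dotp (- x) u = - dotp x u.
Proof. by rewrite -scaleN1r dotpZl mulN1r. Qed.

Lemma dotpBl x y u : dotp (x - y) u = dotp x u - dotp y u.
Proof. by rewrite dotpDl dotpNl. Qed.

Lemma dotpDr x u v : dotp x (u + v) = dotp x u + dotp x v.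
Proof. by rewrite dotpC dotpDl !(dotpC x). Qed.

Lemma dotpZr a x u : dotp x (a *: u) = a * dotp x u.
Proof. by rewrite dotpC dotpZl dotpC. Qed.

Lemma dotpBr x u v : dotp x (u - v) = dotp x u - dotp x v.
Proof. by rewrite dotpC dotpBl !(dotpC x). Qed.

Lemma dotp_sqr_le x i : x ord0 i ^+ 2 <= dotp x x.
Proof.
rewrite /dotp (bigD1 i) //= expr2 lerDl.
by apply: sumr_ge0 => j _; rewrite -expr2 sqr_ge0.
Qed.

Lemma dotp_ge0 x : 0 <= dotp x x.
Proof. by apply: sumr_ge0 => i _; rewrite -expr2 sqr_ge0. Qed.

Lemma dotp_eq0 x : (dotp x x == 0) = (x == 0).
Proof.
apply/idP/eqP => [|->]; last by rewrite /dotp big1 // => i _; rewrite mxE mul0r.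
rewrite psumr_eq0 => [/allP x0|i _]; last by rewrite -expr2 sqr_ge0.
apply/rowP => i; rewrite mxE; apply/eqP.
by have /implyP := x0 i (mem_index_enum _); rewrite mulf_eq0 orbb; apply.
Qed.

End InnerProduct.

Section Projection.
Context {R : realType} {n : nat}.
Implicit Types (z p : 'rV[R]_n * R).

Definition sqdist z p : R :=
  dotp (z.1 - p.1) (z.1 - p.1) + (z.2 - p.2) ^+ 2.

Lemma sqdist_ge0 z p : 0 <= sqdist z p.
Proof. by rewrite addr_ge0 ?dotp_ge0 ?sqr_ge0. Qed.

Lemma continuous_sqdist z : continuous (sqdist z).
Proof.
pose d i p := z.1 ord0 i - p.1 ord0 i; pose e p := z.2 - p.2.
have d_cont i : continuous (d i).
  move=> p; apply: continuousB; first exact: cst_continuous.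
  apply: (@continuous_comp _ _ _ fst (fun M : 'rV[R]_n => M ord0 i)).
    exact: cvg_fst.
  exact: coord_continuous.
have e_cont : continuous e.
  move=> p; apply: (@continuousB _ _ _ (fun=> z.2) snd).
    exact: cst_continuous.
  exact: cvg_snd.
have -> : sqdist z = (fun p => \sum_(i < n) d i p * d i p) + (fun p => e p * e p).
  apply/funext => p; rewrite /sqdist /dotp /= expr2; congr (_ + _).
  by apply: eq_bigr => i _; rewrite !mxE.
move=> p; apply: continuousD.
  apply: (continuous_big (op := +%R)) => //; first exact: add_continuous.
  by move=> i _ q; apply: (@continuousM _ _ (d i)); apply: d_cont.
by apply: (@continuousM _ _ e); apply: e_cont.
Qed.

Lemma sqdist_ball z p r : sqdist z p <= r ->
  (forall i, `|z.1 ord0 i - p.1 ord0 i| <= r + 1) /\ `|z.2 - p.2| <= r + 1.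
Proof.
move=> zpr; have r0 : 0 <= r := le_trans (sqdist_ge0 z p) zpr.
have abs_le a : a ^+ 2 <= r -> `|a| <= r + 1.
  by rewrite expr2 ler_norml => ar; apply/andP; split; nra.
split=> [i|]; apply: abs_le; apply: le_trans zpr; rewrite /sqdist.
  have := dotp_sqr_le (z.1 - p.1) i; rewrite !mxE => /le_trans; apply.
  by rewrite lerDl sqr_ge0.
by rewrite lerDr dotp_ge0.
Qed.

Lemma exists_nearest_point (C : set ('rV[R]_n * R)) z : closed C -> C !=set0 ->
  exists2 p0, C p0 & forall p, C p -> sqdist z p0 <= sqdist z p.
Proof.
move=> Ccl [p1 Cp1]; pose r := sqdist z p1.
pose I i := `[z.1 ord0 i - (r + 1), z.1 ord0 i + (r + 1)]%classic.
pose B := [set v : 'rV[R]_n | forall i, I i (v ord0 i)]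
  `*` `[z.2 - (r + 1), z.2 + (r + 1)]%classic.
have inB p : sqdist z p <= r -> B p.
  move=> /sqdist_ball[h1 h2]; split => [i|] /=; [rewrite /I /=|];
  by rewrite in_itv /= -ler_distlC.
have BC_compact : compact (B `&` C).
  apply: compact_closedI => //; apply: compact_setX; last exact: segment_compact.
  by apply: (@rV_compact _ _ I) => i; exact: segment_compact.
have BC0 : (B `&` C) !=set0 by exists p1; split => //; apply: inB.
have cont : {within B `&` C, continuous (sqdist z)}.
  exact/continuous_subspaceT/continuous_sqdist.
have [c /set_mem[Bc Cc] cmin] := compact_EVT_min BC0 BC_compact cont.
exists c => // p Cp.
have [/inB Bp|/ltW rp] := leP (sqdist z p) r; first exact/cmin/mem_set.
by apply: le_trans rp; apply/cmin/mem_set; split => //; apply: inB.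
Qed.

End Projection.

Section Separation.
Context {R : realType} {n : nat}.
Implicit Types (z p : 'rV[R]_n * R).

Lemma sqdist_eq0 z p : sqdist z p = 0 -> z = p.
Proof.
move=> /eqP; rewrite paddr_eq0 ?dotp_ge0 ?sqr_ge0 // dotp_eq0 sqrf_eq0 !subr_eq0.
by case: z p => [z1 z2] [p1 p2] /andP[/= /eqP-> /eqP->].
Qed.

Lemma nearest_point_obtuse (C : set ('rV[R]_n * R)) z p0 :
  convex_set1 C -> C p0 -> (forall p, C p -> sqdist z p0 <= sqdist z p) ->
  forall p, C p -> dotp (z.1 - p0.1) (p.1 - p0.1) + (z.2 - p0.2) * (p.2 - p0.2) <= 0.
Proof.
move=> Ccvx Cp0 p0min p Cp.
pose e := dotp (z.1 - p0.1) (p.1 - p0.1) + (z.2 - p0.2) * (p.2 - p0.2).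
rewrite -/e; pose d := sqdist p p0.
have d0 : 0 <= d := sqdist_ge0 p p0.
have le_quad t : 0 <= t -> t <= 1 -> 2 * t * e <= t ^+ 2 * d.
  move=> t0 t1; have := p0min _ (Ccvx _ _ _ Cp Cp0 t0 t1).
  suff -> : sqdist z (t *: p.1 + (1 - t) *: p0.1, t * p.2 + (1 - t) * p0.2) =
            sqdist z p0 - 2 * t * e + t ^+ 2 * d by lra.
  rewrite /e /d /sqdist /=.
  have -> : z.1 - (t *: p.1 + (1 - t) *: p0.1) = (z.1 - p0.1) - t *: (p.1 - p0.1).
    by apply/rowP => i; rewrite !mxE; ring.
  rewrite !(dotpBl, dotpBr, dotpZl, dotpZr).
  by rewrite (dotpC p0.1 z.1) (dotpC p.1 z.1) (dotpC p0.1 p.1); ring.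
rewrite leNgt; apply/negP => e0.
pose t := e / (e + d).
have ed : 0 < e + d by lra.
have te : t * (e + d) = e by rewrite /t divfK // gt_eqF.
have t0 : 0 < t by rewrite /t divr_gt0.
have t1 : t <= 1 by rewrite /t ler_pdivrMr // mul1r; lra.
have := le_quad t (ltW t0) t1; rewrite expr2; nra.
Qed.

Lemma separate_point_closed_convex (C : set ('rV[R]_n * R)) z :
  closed C -> convex_set1 C -> C !=set0 -> ~ C z ->
  exists a b, (forall p, C p -> dotp1 a p <= b) /\ b < dotp1 a z.
Proof.
move=> Ccl Ccvx C0 Cz.
have [p0 Cp0 p0min] := exists_nearest_point z Ccl C0.
pose a := (z.1 - p0.1, z.2 - p0.2).
exists a, (dotp1 a p0); split => [p Cp|].
  have := nearest_point_obtuse Ccvx Cp0 p0min Cp.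
  by rewrite /dotp1 /= dotpBr; lra.
have dist_gt0 : 0 < sqdist z p0.
  rewrite lt_neqAle sqdist_ge0 andbT eq_sym.
  by apply: contra_notN Cz => /eqP/sqdist_eq0 ->.
rewrite -subr_gt0; suff -> : dotp1 a z - dotp1 a p0 = sqdist z p0 by [].
by rewrite /dotp1 /sqdist /= [in RHS]dotpBr expr2; ring.
Qed.

End Separation.

Lemma lee_of_fin_ub {R : realType} (a b : \bar R) :
  (forall c : R, (b <= c%:E)%E -> (a <= c%:E)%E) -> (a <= b)%E.
Proof.
case: b => [r h|_|h]; [exact: h | exact: leey |].
case: a h => [s h||//]; last by move=> /(_ 0 (leNye _)).
by exfalso; have := h (s - 1) (leNye _); rewrite lee_fin; lra.
Qed.

Section Conjugate.
Context {R : realType} {n : nat}.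
Implicit Types (f : 'rV[R]_n -> \bar R) (x y u : 'rV[R]_n) (a p : 'rV[R]_n * R).

Lemma conj_fun_ge f x u : ((dotp x u)%:E - f x <= conj_fun f u)%E.
Proof. by apply: ereal_sup_ubound; exists x. Qed.

Lemma conj_fun_le f u c :
  (forall x, ((dotp x u)%:E - f x <= c)%E) -> (conj_fun f u <= c)%E.
Proof. by move=> h; apply: ge_ereal_sup => _ [x _ <-]. Qed.

Lemma conj_fun_leE f u c : (forall y, f y != -oo%E) ->
  (conj_fun f u <= c%:E)%E <-> (forall y r, epi f (y, r) -> dotp u y - r <= c).
Proof.
move=> fN; split => [fu y r|h].
  rewrite /epi /= dotpC; have := le_trans (conj_fun_ge f y u) fu.
  by case: (f y) => [s||] //=; rewrite -EFinB !lee_fin; lra.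
apply: conj_fun_le => y; move: (fN y) (h y); rewrite /epi /=.
case: (f y) => [s _ /(_ s)| |] //=; last by rewrite leNye.
by rewrite -EFinB lee_fin dotpC => /(_ (lexx _)).
Qed.

Lemma dotp1_normalize a p : a.2 < 0 ->
  dotp1 a p = - a.2 * dotp1 ((- a.2)^-1 *: a.1, -1) p.
Proof.
move=> a2_lt0; rewrite /dotp1 /= dotpZl mulrDr mulrA mulfV ?oppr_eq0 ?lt_eqF //.
by rewrite mul1r mulN1r mulrNN.
Qed.

Lemma conj_fun_le_nonvertical f a b : (forall y, f y != -oo%E) -> a.2 < 0 ->
  (forall p, epi f p -> dotp1 a p <= b) ->
  (conj_fun f ((- a.2)^-1 *: a.1) <= ((- a.2)^-1 * b)%:E)%E.
Proof.
move=> fN a2_lt0 h; apply/conj_fun_leE => // y r /h.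
by rewrite (dotp1_normalize _ a2_lt0) ler_pdivlMl ?oppr_gt0 // /dotp1 mulN1r.
Qed.

Lemma proper_fun_fin f : proper_fun f -> exists x r, f x = r%:E.
Proof.
move=> [fN [x]]; move: (fN x); case E: (f x) => [r| |] //= _ _.
by exists x, r.
Qed.

Lemma conj_fun_neqNy f u : proper_fun f -> conj_fun f u != -oo%E.
Proof.
move=> /proper_fun_fin[x [r fx]]; have := conj_fun_ge f x u.
by rewrite fx -EFinB; case: (conj_fun f u).
Qed.

Lemma epi_separation f z : proper_fun f -> closed_fun f -> convex_fun f ->
  ~ epi f z -> exists a b, a.2 <= 0 /\
    (forall p, epi f p -> dotp1 a p <= b) /\ b < dotp1 a z.
Proof.
move=> fp fc fcvx z_epi; have [x1 [r1 fx1]] := proper_fun_fin fp.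
have epi0 : epi f !=set0 by exists (x1, r1); rewrite /epi /= fx1.
have [a [b [sep zb]]] := separate_point_closed_convex fc fcvx epi0 z_epi.
exists a, b; split => //; rewrite leNgt; apply/negP => a2_gt0.
(* dotp1 a is unbounded above on the upward ray from (x1, r1), which lies in epi f *)
pose s := (`|b - dotp1 a (x1, r1)| + 1) / a.2.
have s0 : 0 <= s by rewrite divr_ge0 // ltW.
have s_a2 : s * a.2 = `|b - dotp1 a (x1, r1)| + 1 by rewrite divfK // gt_eqF.
have := sep (x1, r1 + s); rewrite /epi /= fx1 lee_fin lerDl => /(_ s0).
have := ler_norm (b - dotp1 a (x1, r1)); rewrite /dotp1 /=; nra.
Qed.

End Conjugate.

Section FenchelMoreau.
Context {R : realType} {n : nat}.
Implicit Types (f : 'rV[R]_n -> \bar R) (x y u : 'rV[R]_n) (a p : 'rV[R]_n * R).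

Lemma conj_fun_fin_ub f : proper_fun f -> closed_fun f -> convex_fun f ->
  exists u d, (conj_fun f u <= d%:E)%E.
Proof.
move=> fp fc fcvx; have fN : forall y, f y != -oo%E by case: fp.
have [x1 [r1 fx1]] := proper_fun_fin fp.
have : ~ epi f (x1, r1 - 1) by rewrite /epi /= fx1 lee_fin; lra.
move=> /(epi_separation fp fc fcvx) [a [b [a2_le0 [sep zb]]]].
have a2_lt0 : a.2 < 0.
  rewrite lt_neqAle a2_le0 andbT; apply: contraTneq zb => a20.
  have := sep (x1, r1); rewrite /epi /dotp1 /= fx1 a20 lexx => /(_ isT).
  by rewrite !mul0r => ?; rewrite -leNgt.
by exists ((- a.2)^-1 *: a.1), ((- a.2)^-1 * b); apply: conj_fun_le_nonvertical.
Qed.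

Lemma le_of_conj_fun_ge f x c : proper_fun f -> closed_fun f -> convex_fun f ->
  (forall u, ((dotp x u - c)%:E <= conj_fun f u)%E) -> (f x <= c%:E)%E.
Proof.
move=> fp fc fcvx minorant; have fN : forall y, f y != -oo%E by case: fp.
have conj_ub u d : (conj_fun f u <= d%:E)%E -> dotp x u - c <= d.
  by move=> /(le_trans (minorant u)); rewrite lee_fin.
rewrite leNgt; apply/negP => cfx.
have : ~ epi f (x, c) by rewrite /epi /= leNgt cfx.
move=> /(epi_separation fp fc fcvx) [a [b [a2_le0 [sep zb]]]].
have [a2_lt0|a2_ge0] := ltP a.2 0.
  have := conj_ub _ _ (conj_fun_le_nonvertical fN a2_lt0 sep).
  move: zb; rewrite (dotp1_normalize _ a2_lt0) -ltr_pdivrMl ?oppr_gt0 //.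
  rewrite /dotp1 /= mulN1r dotpC.
  by move=> /lt_le_trans/[apply]; rewrite ltxx.
(* vertical hyperplane: add large multiples of a.1 to the slope of an affine
   minorant (u1, d1) of f *)
have a20 : a.2 = 0 by apply/eqP; rewrite eq_le a2_le0 a2_ge0.
have [u1 [d1 conj_u1]] := conj_fun_fin_ub fp fc fcvx.
have dom_sep y r : epi f (y, r) -> dotp a.1 y <= b.
  by move=> /sep; rewrite /dotp1 a20 mul0r addr0.
have gap_gt0 : 0 < dotp a.1 x - b.
  by move: zb; rewrite /dotp1 a20 mul0r addr0 subr_gt0.
pose D := d1 + c - dotp x u1.
pose t := (`|D| + 1) / (dotp a.1 x - b).
have t0 : 0 <= t by rewrite divr_ge0 // ltW.
have t_gap : t * (dotp a.1 x - b) = `|D| + 1 by rewrite divfK // gt_eqF.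
have u1_sep := (conj_fun_leE u1 d1 fN).1 conj_u1.
have : (conj_fun f (u1 + t *: a.1) <= (d1 + t * b)%:E)%E.
  apply/conj_fun_leE => // y r ey; rewrite dotpDl dotpZl.
  have := ler_wpM2l t0 (dom_sep _ _ ey); have := u1_sep _ _ ey; lra.
move=> /conj_ub; rewrite dotpDr dotpZr (dotpC x a.1).
have := ler_norm D; rewrite /D; nra.
Qed.

Lemma biconj_le f x : (conj_fun (conj_fun f) x <= f x)%E.
Proof.
apply: conj_fun_le => u; have := conj_fun_ge f x u.
case: (f x) => [s||]; last 2 first.
- by rewrite leey.
- by rewrite leye_eq => /eqP->.
case: (conj_fun f u) => [t||] //=; last by rewrite leNye.
by rewrite -EFinB !lee_fin dotpC; lra.
Qed.

Lemma conj_funK f : proper_fun f -> closed_fun f -> convex_fun f ->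
  conj_fun (conj_fun f) = f.
Proof.
move=> fp fc fcvx; apply/funext => x; apply/le_anti; rewrite biconj_le /=.
apply: lee_of_fin_ub => c biconj_c; apply: le_of_conj_fun_ge => // u.
have := le_trans (conj_fun_ge (conj_fun f) u x) biconj_c.
case: (conj_fun f u) => [t||] //=; last by rewrite leey.
by rewrite -EFinB !lee_fin dotpC; lra.
Qed.

End FenchelMoreau.

Section Subdifferential.
Context {R : realType} {n : nat}.
Implicit Types (f : 'rV[R]_n -> \bar R) (x y u v : 'rV[R]_n).

(* The equality case of the Fenchel-Young inequality [conj_fun_ge]. *)
Lemma subdiffE f x u r : f x = r%:E ->
  subdiff f x u <-> conj_fun f u = (dotp x u - r)%:E.
Proof.
move=> fx; split => [[_ sub]|conj_u].
  apply/le_anti; rewrite EFinB -fx conj_fun_ge andbT.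
  apply: conj_fun_le => y; have := sub y; rewrite fx.
  case: (f y) => [s||] //=; last by rewrite leNye.
  by rewrite -EFinD -EFinB !lee_fin dotpBl; lra.
split => [|y]; first by rewrite fx.
have := conj_fun_ge f y u; rewrite conj_u fx.
case: (f y) => [s||] //=; last by rewrite leey.
by rewrite -EFinB -EFinD !lee_fin dotpBl; lra.
Qed.

Lemma subdiff_fin f x u : subdiff f x u -> exists r, f x = r%:E.
Proof. by move=> [/fineK fx _]; exists (fine (f x)). Qed.

Lemma subdiff_dom f x u : subdiff f x u -> dom f x.
Proof. by move=> [/fin_numPlt/andP[]]. Qed.

Lemma subdiff_conj f x u : subdiff f x u -> subdiff (conj_fun f) u x.
Proof.
move=> sub; have [r fx] := subdiff_fin sub.
have conj_u := (subdiffE u fx).1 sub.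
split => [|v]; rewrite conj_u //.
have := conj_fun_ge f x v; rewrite fx -EFinB -EFinD; apply: le_trans.
by rewrite lee_fin dotpBl (dotpC v) (dotpC u); lra.
Qed.

Lemma subdiff_conjE f x u : proper_fun f -> closed_fun f -> convex_fun f ->
  subdiff (conj_fun f) u x <-> subdiff f x u.
Proof.
move=> fp fc fcvx; split; last exact: subdiff_conj.
by move=> /subdiff_conj; rewrite conj_funK.
Qed.

End Subdifferential.

Section Faces.
Context {R : realType} {n : nat}.
Implicit Types (g : 'rV[R]_n -> \bar R) (x y u : 'rV[R]_n) (a p : 'rV[R]_n * R).

Lemma Kcone_strictE :
  Kcone `\` [set (- q.1, - q.2) | q in Kcone] =
  [set k : 'rV[R]_n * R | k.1 = 0 /\ 0 < k.2].
Proof.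
apply/seteqP; split => [k [[k1 k2] Nk]|k [k1 k2]].
  split => //; rewrite lt_neqAle k2 andbT; apply/eqP => k20; apply: Nk.
  by exists (0, 0); rewrite /Kcone //= !oppr0 [RHS]surjective_pairing k1 k20.
split; first by split => //; apply: ltW.
by move=> [q [_ q2] qk]; move: k2; rewrite -qk /= oppr_gt0 ltNge q2.
Qed.

Lemma Kminimal_point_epiE g p : (forall y, g y != -oo%E) ->
  Kminimal_point Kcone (epi g) p <-> g p.1 = p.2%:E.
Proof.
move=> gN; rewrite /Kminimal_point Kcone_strictE /epi /=; split.
  move=> [gp below]; move: gp (gN p.1); case E: (g p.1) => [s| |] //= gp _.
  congr (_%:E); apply/le_anti; rewrite -lee_fin gp /= leNgt; apply/negP => sp.
  suff : set0 (p.1, s) by [].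
  rewrite -below; split; last by rewrite /= E.
  exists (0, p.2 - s); first by split => //=; rewrite subr_gt0.
  by congr (_, _) => /=; [exact: subr0 | ring].
move=> gp; split; first by rewrite gp.
apply/seteqP; split => // _ [[k [k1 k2] <-]]; rewrite /= k1 subr0 gp lee_fin.
lra.
Qed.

Lemma epi_hyperplaneE g u c : (forall y, g y != -oo%E) -> conj_fun g u = c%:E ->
  epi g `&` [set p | dotp1 (u, -1) p = c] =
  [set p | subdiff g p.1 u /\ g p.1 = p.2%:E].
Proof.
move=> gN conj_u; apply/seteqP; split => p; rewrite /epi /dotp1 /= mulN1r; last first.
  move=> [sub gp]; split; first by rewrite gp.
  by move: conj_u; rewrite (subdiffE u gp).1 // => -[<-]; rewrite dotpC.
move=> [gp hp]; suff gp_eq : g p.1 = p.2%:E.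
  by split => //; apply/(subdiffE u gp_eq); rewrite conj_u dotpC hp.
apply/le_anti; rewrite gp /=; have := conj_fun_ge g p.1 u; rewrite conj_u.
move: (gN p.1); case: (g p.1) => [s||] //= _; last by rewrite leey.
by rewrite -EFinB !lee_fin dotpC; lra.
Qed.

Lemma Kminimal_exposed_face_nonvertical g a b : (forall y, g y != -oo%E) ->
  (exists p, epi g p /\ dotp1 a p = b) -> (forall p, epi g p -> dotp1 a p <= b) ->
  Kminimal_face Kcone (epi g) (epi g `&` [set p | dotp1 a p = b]) -> a.2 < 0.
Proof.
move=> gN [p0 [ep0 ap0]] sep Kmin.
have gp0 : g p0.1 = p0.2%:E by apply/(Kminimal_point_epiE _ gN)/Kmin.
have ep1 : epi g (p0.1, p0.2 + 1) by rewrite /epi /= gp0 lee_fin lerDl.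
have := sep _ ep1; rewrite -ap0 /dotp1 /= lerD2l mulrDr mulr1 gerDl.
rewrite le_eqVlt => /orP[/eqP a20|//].
have /Kmin/(Kminimal_point_epiE _ gN) :
    (epi g `&` [set p | dotp1 a p = b]) (p0.1, p0.2 + 1).
  by split => //; rewrite -ap0 /dotp1 /= a20 !mul0r.
by rewrite gp0 /= => -[]; lra.
Qed.

Lemma Kminimal_exposed_faceE g F : (forall y, g y != -oo%E) ->
  exposed_face (epi g) F /\ Kminimal_face Kcone (epi g) F <->
  exists u, (exists x, subdiff g x u) /\
    F = [set p | subdiff g p.1 u /\ g p.1 = p.2%:E].
Proof.
move=> gN; split.
  move=> [[a [b [_ [[p0 [ep0 ap0]] [sep ->]]]]] Kmin].
  have a2_lt0 : a.2 < 0.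
    by apply: (Kminimal_exposed_face_nonvertical gN _ sep Kmin); exists p0.
  pose u := (- a.2)^-1 *: a.1; pose c := (- a.2)^-1 * b.
  have normalE p : dotp1 a p = b <-> dotp1 (u, -1) p = c.
    rewrite /c (dotp1_normalize _ a2_lt0).
    by split => [<-|->]; rewrite ?mulKf ?mulVKf ?oppr_eq0 ?lt_eqF.
  have H_eq : [set p | dotp1 a p = b] = [set p | dotp1 (u, -1) p = c].
    by rewrite predeqE => p; apply: normalE.
  have conj_u : conj_fun g u = c%:E.
    apply/le_anti; rewrite conj_fun_le_nonvertical //=.
    have gp0 : g p0.1 = p0.2%:E by apply/(Kminimal_point_epiE _ gN)/Kmin.
    apply: le_trans (conj_fun_ge g p0.1 u); rewrite gp0 -EFinB lee_fin dotpC.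
    by move/normalE: ap0; rewrite /dotp1 /= mulN1r => ->.
  rewrite H_eq (epi_hyperplaneE gN conj_u); exists u; split => //.
  have : (epi g `&` [set p | dotp1 (u, -1) p = c]) p0 by rewrite -H_eq.
  by rewrite (epi_hyperplaneE gN conj_u) => -[sub _]; exists p0.1.
move=> [u [[x0 sub0] ->]]; have [r0 gx0] := subdiff_fin sub0.
have conj_u := (subdiffE u gx0).1 sub0.
split; last by move=> p [_ gp]; apply/Kminimal_point_epiE.
rewrite -(epi_hyperplaneE gN conj_u); exists (u, -1), (dotp x0 u - r0).
split; first by apply/eqP => -[_ /eqP]; rewrite oppr_eq0 oner_eq0.
split; first by exists (x0, r0); rewrite /epi /dotp1 /= gx0 mulN1r dotpC.
split => // p; have : (conj_fun g u <= (dotp x0 u - r0)%:E)%E by rewrite conj_u.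
by move=> /(conj_fun_leE _ _ gN) sep ep; rewrite /dotp1 mulN1r; apply: sep; case: p ep.
Qed.

End Faces.

Theorem proposition3p2 (R : realType) (n : nat) (f : 'rV[R]_n -> \bar R) :
  proper_fun f -> closed_fun f -> convex_fun f ->
  (forall F : set ('rV[R]_n * R), F `<=` epi f ->
     (exposed_face (epi f) F /\ Kminimal_face Kcone (epi f) F <->
      exists ub : 'rV[R]_n, dom (conj_fun f) ub /\
        (exists x, subdiff (conj_fun f) ub x) /\
        F = [set p | subdiff f p.1 ub /\ f p.1 = p.2%:E])) /\
  (forall Fs : set ('rV[R]_n * R), Fs `<=` epi (conj_fun f) ->
     (exposed_face (epi (conj_fun f)) Fs /\
        Kminimal_face Kcone (epi (conj_fun f)) Fs <->
      exists xb : 'rV[R]_n, dom f xb /\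
        (exists u, subdiff f xb u) /\
        Fs = [set p | subdiff f xb p.1 /\ conj_fun f p.1 = p.2%:E])).
Proof.
move=> fp fc fcvx; have fN : forall x, f x != -oo%E by case: fp.
have conjN u := conj_fun_neqNy u fp.
have subdiff_conj_swap x u := subdiff_conjE x u fp fc fcvx.
split=> [F _|Fs _]; rewrite Kminimal_exposed_faceE //; split.
- move=> [u [[x /subdiff_conj sub] ->]].
  by exists u; split; [exact: subdiff_dom sub | split; first by exists x].
- by move=> [u [_ [[x /subdiff_conj_swap sub] ->]]]; exists u; split; first by exists x.
- move=> [x [[u /subdiff_conj_swap sub] ->]]; exists x.
  split; first exact: subdiff_dom sub.
  split; first by exists u.
  by rewrite predeqE => p /=; rewrite subdiff_conj_swap.
- move=> [x [_ [[u /subdiff_conj sub] ->]]]; exists x; split; first by exists u.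
  by rewrite predeqE => p /=; rewrite subdiff_conj_swap.
Qed.
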